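(* Assume $f$ satisfies Hypothesis 2 (see context) and let $\xi,\xi_\eta$ be as defined in the context. Then for each $\eta\in(0,1]$ and all $s\in(0,+\infty)$: \[ |\xi_\eta(s)|\le|\xi(s)|,\qquad |\xi_\eta'(s)|\le\frac{|\xi(s)|}{s}+\frac{1}{s^2f''(s)}+\frac{2\eta|\xi(s)|}{s^2f''(s)}, \] \[ |\xi_\eta''(s)f''(s)s^2|\le2\eta|\xi_\eta'(s)|+(1+2\eta|\xi(s)|)\,\big|(\log(f''(s)s))'\big|. \]
   Context: Hypothesis 2 on $f\colon(0,\infty)\to\mathbb{R}$: (I1) $f\in C^{4,\beta}_{loc}(0,\infty)$ for some $\beta\in(0,1]$, $f''>0$; (I2) $\frac{1}{\alpha\kappa}s^\alpha\le s^2f''(s)$ for $s>0$, with $\alpha\in(0,1)$, $\kappa>0$; (I3) $|sf'''(s)/f''(s)|\le\kappa$ for $s>0$; (I4) there is $\mathcal{K}_{\inf}>0$ with $\int_\Omega f(\mu)\,dx>-\mathcal{K}_{\inf}$ for all $\mu\in\mathscr{P}^{ac}(\Omega)$, $\Omega=(0,L)$. Define $\xi(s)=-s\int_s^\infty\frac{dy}{y^3f''(y)}$ and, for $\eta\in(0,1]$, $\xi_\eta(s)=-s\exp\!\big(\int_0^s\frac{2\eta}{y^2f''(y)}dy\big)\int_s^\infty\exp\!\big(-\int_0^y\frac{2\eta}{z^2f''(z)}dz\big)\frac{dy}{y^3f''(y)}$. *)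

From HB Require Import structures.
From mathcomp Require Import all_boot all_order all_algebra.
From mathcomp Require Import all_classical all_reals all_analysis.
Set Implicit Arguments. Unset Strict Implicit. Unset Printing Implicit Defensive.
Import Order.TTheory GRing.Theory Num.Theory.
Import numFieldNormedType.Exports.
Local Open Scope classical_set_scope.
Local Open Scope ring_scope.

Section Defs.
Variable R : realType.
Local Notation mu := (@lebesgue_measure R).

Definition d2 (f : R -> R) : R -> R := derive1n 2 f.

Definition holder_loc_pos (g : R -> R) (beta : R) : Prop :=
  forall a b : R, 0 < a -> a <= b ->
  exists C : R, forall x y : R, a <= x <= b -> a <= y <= b ->
    `|g x - g y| <= C * (`|x - y| `^ beta).

Definition C4beta_loc (f : R -> R) (beta : R) : Prop :=
  (forall k : nat, (k < 4)%N -> forall x : R, 0 < x -> derivable (derive1n k f) x 1)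
  /\ holder_loc_pos (derive1n 4 f) beta.

Definition Omega (L : R) : set R := `]0, L[%classic.

Definition hypothesis2 (f : R -> R) (beta alpha kappa L Kinf : R) : Prop :=
  [/\ (0 < beta <= 1) /\ C4beta_loc f beta /\ (forall s : R, 0 < s -> 0 < d2 f s),
      (forall s : R, 0 < s -> (alpha * kappa)^-1 * (s `^ alpha) <= s ^+ 2 * d2 f s),
      (forall s : R, 0 < s -> `|s * derive1n 3 f s / d2 f s| <= kappa) &
      (0 < Kinf /\
       forall rho : R -> R,
         measurable_fun (Omega L) rho ->
         (forall x : R, 0 < x < L -> 0 < rho x) ->
         ((\int[mu]_(x in Omega L) (rho x)%:E)%E = 1%E) ->
         ((- Kinf)%:E < \int[mu]_(x in Omega L) (f (rho x))%:E)%E)].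

Definition xi (f : R -> R) (s : R) : R :=
  - s * Rintegral mu `]s, +oo[%classic (fun y => (y ^+ 3 * d2 f y)^-1).

Definition Phi (f : R -> R) (eta s : R) : R :=
  Rintegral mu `]0, s[%classic (fun y => 2 * eta / (y ^+ 2 * d2 f y)).

Definition xi_eta (f : R -> R) (eta s : R) : R :=
  - s * expR (Phi f eta s) *
  Rintegral mu `]s, +oo[%classic (fun y => expR (- Phi f eta y) / (y ^+ 3 * d2 f y)).

End Defs.

(* Write q(y) = 1 / (y^2 f''(y)).  Hypothesis (I2) gives q(y) <= C y^-alpha,
   so q is integrable at 0 and q(y)/y at infinity; hence Phi_eta, a primitive of
   2 eta q, is C^1 and nondecreasing, and
   xi_eta(s) = - s e^Phi(s) int_s^oo e^-Phi(y) q(y)/y dy.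
   Since e^(Phi(s) - Phi(y)) <= 1 for y >= s, |xi_eta| <= |xi|.  Differentiating,
   xi_eta' = xi_eta / s + 2 eta q xi_eta + q, which gives the first-derivative
   bound.  Differentiating again with q' = - q ((log (f'' s))' + 1/s), all the
   1/s terms cancel and
   xi_eta'' = q (2 eta xi_eta' - (1 + 2 eta xi_eta) (log (f'' s))'),
   which is the second-derivative bound. *)

From HB Require Import structures.
From mathcomp Require Import all_boot all_order all_algebra.
From mathcomp Require Import all_classical all_reals all_analysis.
From mathcomp Require Import measurable_realfun.
From mathcomp.algebra_tactics Require Import ring.
Set Implicit Arguments.
Unset Strict Implicit.
Unset Printing Implicit Defensive.
Import Order.TTheory GRing.Theory Num.Theory.
Import numFieldNormedType.Exports.
Local Open Scope classical_set_scope.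
Local Open Scope ring_scope.

Section improper_integrals.
Context {R : realType}.
Local Notation mu := (@lebesgue_measure R).

Lemma derivable_continuous_at (f : R -> R) x :
  derivable f x 1 -> {for x, continuous f}.
Proof. by move=> /derivable1_diffP /differentiable_continuous. Qed.

Lemma integral_itvcc_antiderivative (p P : R -> R) (a b : R) : a < b ->
  {within `[a, b], continuous p} ->
  (forall y, a <= y <= b -> is_derive y 1 P (p y)) ->
  (\int[mu]_(x in `[a, b]) (p x)%:E = (P b - P a)%:E)%E.
Proof.
move=> ab pc DP; have DPo y : a < y < b -> is_derive y 1 P (p y).
  by case/andP=> ay yb; apply: DP; rewrite !ltW.
have Pc y : a <= y <= b -> {for y, continuous P}.
  by move=> /DP [] /derivable_continuous_at.
rewrite EFinB; apply: (continuous_FTC2 ab pc).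
- split.
  + by move=> y; rewrite in_itv /= => /DPo [].
  + by apply: cvg_at_right_filter; apply: (Pc a); rewrite lexx (ltW ab).
  + by apply: cvg_at_left_filter; apply: (Pc b); rewrite lexx (ltW ab).
- by move=> y; rewrite in_itv /= => /DPo Dy; rewrite derive1E derive_val.
Qed.

Lemma integrable_bigcup_itv_antiderivative (D : set R) (p P : R -> R)
    (a b : nat -> R) (M : R) :
  open D -> {in D, continuous p} ->
  (forall y, D y -> 0 <= p y) -> (forall y, D y -> is_derive y 1 P (p y)) ->
  (forall n, a n < b n) -> (forall n, `[a n, b n]%classic `<=` D) ->
  nondecreasing_seq (fun n => `[a n, b n]%classic) ->
  (forall n, P (b n) - P (a n) <= M) ->
  mu.-integrable (\bigcup_n `[a n, b n]%classic) (EFin \o p).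
Proof.
move=> oD pc p0 DP ab abD nd PM.
have abDn n y : a n <= y <= b n -> D y.
  by move=> aby; apply: (abD n); rewrite /= in_itv.
have mp : measurable_fun D p := open_continuous_measurable_fun oD pc.
have mpn n : measurable_fun `[a n, b n]%classic (EFin \o p).
  by apply/measurable_EFinP; exact: measurable_funS (open_measurable oD) (abD n) mp.
have p0n n y : `[a n, b n]%classic y -> (0 <= (EFin \o p) y)%E.
  by rewrite /= in_itv lee_fin => /abDn /p0.
have int_n n : (\int[mu]_(x in `[a n, b n]) (p x)%:E = (P (b n) - P (a n))%:E)%E.
  apply: integral_itvcc_antiderivative (ab n) _ (fun y aby => DP y (abDn n y aby)).
  apply: continuous_in_subspaceT => y /[1!inE] /= /[1!in_itv] /abDn Dy.
  by apply: pc; rewrite inE.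
apply/integrableP; split.
  apply/measurable_EFinP; apply: measurable_funS (open_measurable oD) _ mp => //.
  by move=> y [n _]; exact: abD.
under eq_integral => y /[1!inE] -[n _ /p0n y0] do rewrite gee0_abs //.
have cv := ge0_nondecreasing_set_cvg_integral (mu := mu) nd
  (fun n => measurable_itv _) mpn p0n.
apply: (@le_lt_trans _ _ M%:E); last exact: ltry.
rewrite -(cvg_lim _ cv) //; apply: lime_le; first exact: cvgP cv.
by apply: nearW => n; rewrite /= int_n lee_fin.
Qed.

Lemma bigcup_itvcc_itvoc0 (s : R) : 0 < s ->
  \bigcup_n `[s / n.+2%:R, s]%classic = `]0, s]%classic.
Proof.
move=> s0; apply/seteqP; split => y /=.
  move=> [n _]; rewrite /= !in_itv /= => /andP[sny ->]; rewrite andbT.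
  by apply: lt_le_trans sny; rewrite divr_gt0.
rewrite in_itv /= => /andP[y0 ys]; exists (Num.truncn (s / y)) => //=.
rewrite in_itv /= ys andbT ler_pdivrMr // mulrC -ler_pdivrMr //.
by apply: ltW; apply: lt_le_trans (truncnS_gt _) _; rewrite ler_nat.
Qed.

Lemma bigcup_itvcc_itvcy (s : R) :
  \bigcup_n `[s, s + n.+1%:R]%classic = `[s, +oo[%classic.
Proof.
apply/seteqP; split => y /=.
  by move=> [n _]; rewrite /= !in_itv /= andbT => /andP[].
rewrite in_itv /= andbT => sy; exists (Num.truncn (y - s)) => //=.
rewrite in_itv /= sy -lerBlDl; apply: ltW; exact: truncnS_gt.
Qed.

Lemma integrable_powR_itvoc0 (r s : R) : -1 < r -> 0 < s ->
  mu.-integrable `]0, s]%classic (EFin \o (fun y => y `^ r)).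
Proof.
move=> r1 s0; have r1_gt0 : 0 < r + 1 by rewrite -ltrBlDr sub0r.
pose P y := (r + 1)^-1 * y `^ (r + 1).
rewrite -bigcup_itvcc_itvoc0 //.
apply: (@integrable_bigcup_itv_antiderivative `]0, +oo[%classic _ P
  (fun n => s / n.+2%:R) (fun=> s) (P s)).
- exact: rray_open.
- move=> y; rewrite in_setE /= in_itv /= andbT => y0.
  by apply: derivable_continuous_at; have [] := is_derive1_powR r y0.
- by move=> y _; exact: powR_ge0.
- move=> y /= /[1!in_itv] /= /andP[y0 _].
  have Dpow := is_derive1_powR (r + 1) y0.
  rewrite /P; apply: is_derive_eq.
  by rewrite /GRing.scale /= addrK mulrA mulVf ?gt_eqF // mul1r.
- by move=> n; rewrite ltr_pdivrMr // ltr_pMr // ltr1n.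
- move=> n y /=; rewrite !in_itv /= => /andP[sny _]; rewrite andbT.
  by apply: lt_le_trans sny; rewrite divr_gt0.
- apply/nondecreasing_seqP => n; rewrite subsetEset => y /=.
  rewrite !in_itv /= => /andP[sny ->]; rewrite andbT; apply: le_trans sny.
  by rewrite ler_pM2l // lef_pV2 ?posrE // ler_nat.
- move=> n; rewrite lerBlDr lerDl /P mulr_ge0 ?powR_ge0 //.
  by rewrite invr_ge0 ltW.
Qed.

Lemma integrable_powR_itvcy (r s : R) : r < -1 -> 0 < s ->
  mu.-integrable `[s, +oo[%classic (EFin \o (fun y => y `^ r)).
Proof.
move=> r1 s0; have r1_lt0 : r + 1 < 0 by rewrite -ltrBrDr sub0r.
pose P y := (r + 1)^-1 * y `^ (r + 1).
rewrite -bigcup_itvcc_itvcy.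
apply: (@integrable_bigcup_itv_antiderivative `]0, +oo[%classic _ P
  (fun=> s) (fun n => s + n.+1%:R) (- P s)).
- exact: rray_open.
- move=> y; rewrite in_setE /= in_itv /= andbT => y0.
  by apply: derivable_continuous_at; have [] := is_derive1_powR r y0.
- by move=> y _; exact: powR_ge0.
- move=> y /= /[1!in_itv] /= /andP[y0 _].
  have Dpow := is_derive1_powR (r + 1) y0.
  rewrite /P; apply: is_derive_eq.
  by rewrite /GRing.scale /= addrK mulrA mulVf ?lt_eqF // mul1r.
- by move=> n; rewrite ltrDl.
- move=> n y /=; rewrite !in_itv /= => /andP[sy _]; rewrite andbT.
  exact: lt_le_trans sy.
- apply/nondecreasing_seqP => n; rewrite subsetEset => y /=.
  rewrite !in_itv /= => /andP[-> ysn] /=; apply: le_trans ysn _.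
  by rewrite lerD2l ler_nat.
- move=> n; rewrite lerBlDr addNr /P -oppr_ge0 -mulNr.
  by rewrite mulr_ge0 ?powR_ge0 // oppr_ge0 invr_le0 ltW.
Qed.

Lemma is_derive_Rintegral_itvoc (k : R -> R) (a t u : R) : a < t < u ->
  mu.-integrable `]a, u]%classic (EFin \o k) -> {for t, continuous k} ->
  is_derive t 1 (fun x => \int[mu]_(y in `]a, x]) k y) (k t).
Proof.
move=> /andP[a_t t_u] ik kt.
have [dF <-] := continuous_FTC1 t_u ik (a_t : (BRight a < BRight t)%O) kt.
by rewrite derive1E; exact: derivableP dF.
Qed.

Lemma is_derive_Rintegral_itvoo (k : R -> R) (a t u : R) : a < t < u ->
  mu.-integrable `]a, u]%classic (EFin \o k) -> {for t, continuous k} ->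
  is_derive t 1 (fun x => \int[mu]_(y in `]a, x[) k y) (k t).
Proof.
move=> atu ik kt.
move: (is_derive_Rintegral_itvoc atu ik kt); apply: near_eq_is_derive.
have /andP[_ tu] := atu; near=> x.
rewrite Rintegral_itv_bndo_bndc //; apply: integrableS ik => //.
apply: subset_itvl; rewrite bnd_simp; apply: ltW.
by near: x; exact: lt_nbhsl.
Unshelve. all: by end_near.
Qed.

Lemma is_derive_Rintegral_itvoy (k : R -> R) (a t : R) : a < t ->
  mu.-integrable `]a, +oo[%classic (EFin \o k) -> {for t, continuous k} ->
  is_derive t 1 (fun x => \int[mu]_(y in `]x, +oo[) k y) (- k t).
Proof.
move=> a_t ik kt.
have ik1 : mu.-integrable `]a, t + 1]%classic (EFin \o k).
  by apply: integrableS ik => //; apply: subset_itvl.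
have at1 : a < t < t + 1 by rewrite a_t ltrDl ltr01.
have DF := is_derive_Rintegral_itvoc at1 ik1 kt.
have : is_derive t 1
    (fun x => \int[mu]_(y in `]a, +oo[) k y - \int[mu]_(y in `]a, x]) k y) (- k t).
  by apply: is_derive_eq; ring.
apply: near_eq_is_derive; near=> x; apply: Rintegral_itvB => //.
by rewrite bnd_simp; apply: ltW; near: x; exact: lt_nbhsr.
Unshelve. all: by end_near.
Qed.

End improper_integrals.

Section xi_eta_estimates.
Context {R : realType}.
Local Notation mu := (@lebesgue_measure R).
Variables (f : R -> R) (c alpha eta : R).
Local Notation g := (d2 f).
Implicit Types (x y s t : R).
Hypotheses (c_gt0 : 0 < c) (alpha_gt0 : 0 < alpha) (alpha_lt1 : alpha < 1).
Hypothesis eta_ge0 : 0 <= eta.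
Hypothesis g_gt0 : forall y, 0 < y -> 0 < g y.
Hypothesis g_derivable : forall y, 0 < y -> derivable g y 1.
Hypothesis g_ge_powR : forall y, 0 < y -> c * y `^ alpha <= y ^+ 2 * g y.

Let q2 y := (y ^+ 2 * g y)^-1.
Let q3 y := (y ^+ 3 * g y)^-1.

Let measurable_fun_pos (k : R -> R) (A : set R) : A `<=` `]0, +oo[%classic ->
  (forall y, 0 < y -> {for y, continuous k}) -> measurable_fun A (EFin \o k).
Proof.
move=> Apos kc.
have pos_open : open (`]0, +oo[%classic : set R) by exact: rray_open.
apply/measurable_EFinP; apply: (measurable_funS (open_measurable pos_open) Apos).
apply: open_continuous_measurable_fun => //.
by move=> y; rewrite in_setE /= in_itv /= andbT; exact: kc.
Qed.

Lemma q2_gt0 y : 0 < y -> 0 < q2 y.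
Proof. by move=> y0; rewrite invr_gt0 mulr_gt0 ?exprn_gt0 ?g_gt0. Qed.

Lemma q3E y : q3 y = q2 y / y.
Proof. by rewrite /q3 /q2 exprSr -mulrA [y * _]mulrC mulrA invfM. Qed.

Lemma q3_gt0 y : 0 < y -> 0 < q3 y.
Proof. by move=> y0; rewrite q3E divr_gt0 ?q2_gt0. Qed.

Lemma is_derive_q2 y : 0 < y ->
  is_derive y 1 q2 (- q2 y * (2 / y + derive1 g y / g y)).
Proof.
move=> y0; have Dg := derivableP (g_derivable y0).
have Dy2g :
    is_derive y 1 (fun t => t ^+ 2 * g t) (y ^+ 2 * 'D_1 g y + g y * (2 * y)).
  by apply: is_derive_eq; rewrite /GRing.scale /=; ring.
have y2g_neq0 : y ^+ 2 * g y != 0 by rewrite mulf_neq0 ?expf_neq0 ?gt_eqF ?g_gt0.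
apply: is_derive_eq (is_deriveV _ Dy2g) _ => //.
by rewrite /q2 derive1E /GRing.scale /=; field; rewrite ?gt_eqF ?g_gt0.
Qed.

Lemma q2_continuous y : 0 < y -> {for y, continuous q2}.
Proof. by move=> /is_derive_q2 [] /derivable_continuous_at. Qed.

Lemma q3_continuous y : 0 < y -> {for y, continuous q3}.
Proof.
move=> y0; have -> : q3 = q2 \* GRing.inv by apply/funext => t; rewrite q3E.
apply: continuousM; first exact: q2_continuous.
by apply: inv_continuous; rewrite gt_eqF.
Qed.

Lemma q2_le_powR y : 0 < y -> q2 y <= c^-1 * y `^ (- alpha).
Proof.
move=> y0; rewrite powRN -invfM.
rewrite lef_pV2 ?posrE ?mulr_gt0 ?exprn_gt0 ?g_gt0 ?powR_gt0 //.
exact: g_ge_powR.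
Qed.

Lemma q3_le_powR y : 0 < y -> q3 y <= c^-1 * y `^ (- alpha - 1).
Proof.
move=> y0; rewrite q3E powRB ?(gt_eqF y0) ?implybT // (powRr1 (ltW y0)) mulrA.
by rewrite ler_pM2r ?invr_gt0 // q2_le_powR.
Qed.

Lemma integrable_q2 x : 0 < x -> mu.-integrable `]0, x]%classic (EFin \o q2).
Proof.
move=> x0; have alpha1 : -1 < - alpha by rewrite ltrN2.
have ipow := integrable_powR_itvoc0 alpha1 x0.
apply: le_integrable (integrableZl _ c^-1 ipow) => //.
- apply: measurable_fun_pos; last exact: q2_continuous.
  by move=> y /=; rewrite !in_itv /= andbT => /andP[].
- move=> y /=; rewrite in_itv /= => /andP[y0 _].
  have cpow_ge0 : 0 <= c^-1 * y `^ (- alpha).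
    by rewrite mulr_ge0 ?invr_ge0 ?powR_ge0 ?(ltW c_gt0).
  by rewrite lee_fin !ger0_norm ?q2_le_powR ?(ltW (q2_gt0 y0)).
Qed.

Lemma integrable_q3 x : 0 < x -> mu.-integrable `]x, +oo[%classic (EFin \o q3).
Proof.
move=> x0; have alpha1 : - alpha - 1 < -1 by rewrite ltrBlDr addNr oppr_lt0.
have ipow :
    mu.-integrable `]x, +oo[%classic (EFin \o (fun y => y `^ (- alpha - 1))).
  apply: integrableS (integrable_powR_itvcy alpha1 x0) => //.
  by apply: subset_itvr; rewrite bnd_simp.
apply: le_integrable (integrableZl _ c^-1 ipow) => //.
- apply: measurable_fun_pos; last exact: q3_continuous.
  by move=> y /=; rewrite !in_itv /= !andbT; exact: lt_trans.
- move=> y /=; rewrite in_itv /= andbT => /(lt_trans x0) y0.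
  have cpow_ge0 : 0 <= c^-1 * y `^ (- alpha - 1).
    by rewrite mulr_ge0 ?invr_ge0 ?powR_ge0 ?(ltW c_gt0).
  by rewrite lee_fin !ger0_norm ?q3_le_powR ?(ltW (q3_gt0 y0)).
Qed.

Let phi y := 2 * eta * q2 y.

Lemma integrable_phi x : 0 < x -> mu.-integrable `]0, x]%classic (EFin \o phi).
Proof.
by move=> x0; apply: eq_integrable (integrableZl _ (2 * eta) (integrable_q2 x0)).
Qed.

Lemma phi_ge0 y : 0 < y -> 0 <= phi y.
Proof. by move=> y0; rewrite !mulr_ge0 // ltW // q2_gt0. Qed.

Lemma is_derive_Phi t : 0 < t -> is_derive t 1 (Phi f eta) (phi t).
Proof.
move=> t0; have t1 : 0 < t < t + 1 by rewrite t0 ltrDl ltr01.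
apply: (is_derive_Rintegral_itvoo t1 (integrable_phi (addr_gt0 t0 ltr01))).
by apply: continuousM; [exact: cst_continuous | exact: q2_continuous].
Qed.

Lemma Phi_ge0 s : 0 <= Phi f eta s.
Proof. by apply: Rintegral_ge0 => y; rewrite /= in_itv /= => /andP[/phi_ge0]. Qed.

Lemma Phi_le s y : 0 < s -> s <= y -> Phi f eta s <= Phi f eta y.
Proof.
move=> s0 sy; have Dz z : s <= z -> is_derive z 1 (Phi f eta) (phi z).
  by move=> sz; apply: is_derive_Phi; exact: lt_le_trans sz.
apply: (ger0_derive1_ndecr (a := s) (b := y)) => //.
- by move=> z; rewrite in_itv /= => /andP[/ltW /Dz []].
- move=> z; rewrite in_itv /= => /andP[sz _]; have Dphi := Dz z (ltW sz).
  by rewrite derive1E derive_val phi_ge0 // (lt_trans s0 sz).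
- apply: derivable_within_continuous => z; rewrite in_itv /= => /andP[/Dz [] //].
Qed.

Let h y := expR (- Phi f eta y) * q3 y.

Lemma h_continuous y : 0 < y -> {for y, continuous h}.
Proof.
move=> y0; apply: continuousM; last exact: q3_continuous.
apply: continuous_comp; last exact: continuous_expR.
apply: continuousN; apply: derivable_continuous_at.
by have [] := is_derive_Phi y0.
Qed.

Lemma h_ge0 y : 0 < y -> 0 <= h y.
Proof. by move=> y0; rewrite mulr_ge0 ?expR_ge0 // ltW // q3_gt0. Qed.

Lemma integrable_h x : 0 < x -> mu.-integrable `]x, +oo[%classic (EFin \o h).
Proof.
move=> x0; apply: le_integrable (integrable_q3 x0) => //.
- apply: measurable_fun_pos; last exact: h_continuous.
  by move=> y /=; rewrite !in_itv /= !andbT; exact: lt_trans.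
- move=> y /=; rewrite in_itv /= andbT => /(lt_trans x0) y0.
  have q3_ge0 := ltW (q3_gt0 y0).
  rewrite lee_fin (ger0_norm (h_ge0 y0)) (ger0_norm q3_ge0) ler_piMl //.
  by rewrite expR_le1 oppr_le0 Phi_ge0.
Qed.

Lemma is_derive_Rintegral_h t : 0 < t ->
  is_derive t 1 (fun s => \int[mu]_(y in `]s, +oo[) h y) (- h t).
Proof.
move=> t0; have t2 : 0 < t / 2 by rewrite divr_gt0.
apply: (is_derive_Rintegral_itvoy _ (integrable_h t2) (h_continuous t0)).
by rewrite ltr_pdivrMr // ltr_pMr // ltr1n.
Qed.

Lemma is_derive_xi_eta t : 0 < t -> is_derive t 1 (xi_eta f eta)
  (xi_eta f eta t / t + 2 * eta * q2 t * xi_eta f eta t + q2 t).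
Proof.
move=> t0; have DPhi := is_derive_Phi t0.
have DexpPhi :
    is_derive t 1 (fun s => expR (Phi f eta s)) (expR (Phi f eta t) * phi t).
  exact: is_derive1_comp.
have DI := is_derive_Rintegral_h t0.
rewrite /xi_eta; apply: is_derive_eq.
rewrite /GRing.scale /= /h /phi q3E expRN.
by field; rewrite !gt_eqF ?expR_gt0.
Qed.

Lemma norm_xi_eta_le s : 0 < s -> `|xi_eta f eta s| <= `|xi f s|.
Proof.
move=> s0; have q3_ge0 y : s < y -> 0 <= q3 y.
  by move=> sy; exact/ltW/q3_gt0/(lt_trans s0 sy).
have int_ge0 k :
    (forall y, s < y -> 0 <= k y) -> 0 <= \int[mu]_(y in `]s, +oo[) k y.
  by move=> k0; apply: Rintegral_ge0 => y; rewrite /= in_itv /= andbT; exact: k0.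
rewrite /xi_eta /xi !normrM normrN.
rewrite !ger0_norm ?expR_ge0 ?(ltW s0) ?int_ge0 //; last first.
  by move=> y /[dup] /(lt_trans s0) /h_ge0.
rewrite -mulrA ler_pM2l // -RintegralZl //; last exact: integrable_h.
apply: le_Rintegral => //.
- exact: eq_integrable (integrableZl _ (expR (Phi f eta s)) (integrable_h s0)).
- exact: integrable_q3.
- move=> y; rewrite /= in_itv /= andbT => sy; rewrite mulrA -expRD.
  apply: ler_piMl; first exact: q3_ge0.
  by rewrite expR_le1 subr_le0 Phi_le // ltW.
Qed.

Lemma derive1_xi_eta t : 0 < t -> derive1 (xi_eta f eta) t =
  xi_eta f eta t / t + 2 * eta * q2 t * xi_eta f eta t + q2 t.
Proof. by move=> /is_derive_xi_eta Dxi; rewrite derive1E derive_val. Qed.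

Lemma derive1_ln_g_mul s : 0 < s ->
  derive1 (fun t => ln (g t * t)) s = derive1 g s / g s + s^-1.
Proof.
move=> s0; have gs_gt0 : 0 < g s * s by rewrite mulr_gt0 ?g_gt0.
have Dg := derivableP (g_derivable s0).
have Dgs : is_derive s 1 (fun t => g t * t) (g s + s * 'D_1 g s).
  by apply: is_derive_eq; rewrite /GRing.scale /=; ring.
have Dln :
    is_derive s 1 (fun t => ln (g t * t)) ((g s * s)^-1 * (g s + s * 'D_1 g s)).
  exact: (is_derive1_comp (g := fun t => g t * t) (is_derive1_ln gs_gt0) Dgs).
rewrite !derive1E derive_val.
by field; rewrite !gt_eqF ?g_gt0.
Qed.

Lemma is_derive_derive1_xi_eta s : 0 < s ->
  is_derive s 1 (derive1 (xi_eta f eta)) (q2 s * (2 * eta * derive1 (xi_eta f eta) s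
    - (2 * eta * xi_eta f eta s + 1) * derive1 (fun t => ln (g t * t)) s)).
Proof.
move=> s0; have Dxi := is_derive_xi_eta s0; have Dq2 := is_derive_q2 s0.
have Dinv : is_derive s 1 (fun t : R => t^-1) (- (s ^+ 2)^-1).
  by apply: is_derive_eq (is_deriveV _ (is_derive_id s 1)) _;
    rewrite ?scaler1 ?gt_eqF.
apply: (@near_eq_is_derive _ _ _
  (fun t => xi_eta f eta t / t + 2 * eta * q2 t * xi_eta f eta t + q2 t)).
  by near=> t; rewrite derive1_xi_eta //; near: t; exact: lt_nbhsr.
apply: is_derive_eq.
rewrite /GRing.scale /= derive1_xi_eta // derive1_ln_g_mul //.
by field; rewrite !gt_eqF ?g_gt0.
Unshelve. all: by end_near.
Qed.

Lemma norm_derive1_xi_eta_le s : 0 < s -> `|derive1 (xi_eta f eta) s| <=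
  `|xi f s| / s + (s ^+ 2 * g s)^-1 + 2 * eta * `|xi f s| / (s ^+ 2 * g s).
Proof.
move=> s0; have xi_le := norm_xi_eta_le s0; have q2s := q2_gt0 s0.
have eq2_ge0 : 0 <= 2 * eta * q2 s by rewrite !mulr_ge0 // ltW.
rewrite derive1_xi_eta // addrAC.
apply: le_trans (ler_normD _ _) _; apply: lerD.
  apply: le_trans (ler_normD _ _) _; rewrite (gtr0_norm q2s) lerD2r.
  by rewrite normrM normfV (gtr0_norm s0) ler_wpM2r // invr_ge0 ltW.
by rewrite normrM (ger0_norm eq2_ge0) [leRHS]mulrAC ler_wpM2l.
Qed.

Lemma norm_derive2_xi_eta_le s : 0 < s ->
  `|derive1n 2 (xi_eta f eta) s * g s * s ^+ 2| <=
    2 * eta * `|derive1 (xi_eta f eta) s|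
    + (1 + 2 * eta * `|xi f s|) * `|derive1 (fun t => ln (g t * t)) s|.
Proof.
move=> s0; have D2xi := is_derive_derive1_xi_eta s0.
have e2_ge0 : 0 <= 2 * eta by rewrite mulr_ge0.
have q2K x : q2 s * x * g s * s ^+ 2 = x.
  by rewrite /q2; field; rewrite !gt_eqF ?g_gt0.
rewrite [derive1n 2 _ _]/= derive1E derive_val q2K.
apply: (le_trans (ler_normB _ _)); rewrite normrM (ger0_norm e2_ge0) lerD2l normrM.
apply: ler_wpM2r => //; apply: (le_trans (ler_normD _ _)).
rewrite normr1 addrC lerD2l normrM (ger0_norm e2_ge0).
by rewrite ler_wpM2l // norm_xi_eta_le.
Qed.

End xi_eta_estimates.

Theorem proposition3p1 (R : realType) (f : R -> R) (beta alpha kappa L Kinf : R) :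
  0 < alpha < 1 -> 0 < kappa -> 0 < L ->
  hypothesis2 f beta alpha kappa L Kinf ->
  forall eta : R, 0 < eta <= 1 ->
  forall s : R, 0 < s ->
  [/\ `|xi_eta f eta s| <= `|xi f s|,
      derivable (xi_eta f eta) s 1,
      `|derive1 (xi_eta f eta) s| <=
        `|xi f s| / s + (s ^+ 2 * d2 f s)^-1 + 2 * eta * `|xi f s| / (s ^+ 2 * d2 f s),
      derivable (derive1 (xi_eta f eta)) s 1 &
      `|derive1n 2 (xi_eta f eta) s * d2 f s * s ^+ 2| <=
        2 * eta * `|derive1 (xi_eta f eta) s|
        + (1 + 2 * eta * `|xi f s|) * `|derive1 (fun t => ln (d2 f t * t)) s|].
Proof.
move=> /andP[alpha_gt0 alpha_lt1] kappa_gt0 _.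
move=> [[_ [[f_derivable _] d2f_gt0]] d2f_ge _ _].
move=> eta /andP[/ltW eta_ge0 _] s s_gt0.
(* Only f'' > 0, the differentiability of f'' and (I2) are needed. *)
set c := (alpha * kappa)^-1 in d2f_ge.
have c_gt0 : 0 < c by rewrite invr_gt0 mulr_gt0.
have d2f_derivable y : 0 < y -> derivable (d2 f) y 1 := f_derivable 2%N isT y.
have [xi_eta_derivable _] := is_derive_xi_eta c_gt0 alpha_gt0 alpha_lt1
  eta_ge0 d2f_gt0 d2f_derivable d2f_ge s_gt0.
have [derive1_xi_eta_derivable _] := is_derive_derive1_xi_eta c_gt0 alpha_gt0
  alpha_lt1 eta_ge0 d2f_gt0 d2f_derivable d2f_ge s_gt0.
split => //.
- by apply: (norm_xi_eta_le (c := c) (alpha := alpha)).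
- by apply: (norm_derive1_xi_eta_le (c := c) (alpha := alpha)).
- by apply: (norm_derive2_xi_eta_le (c := c) (alpha := alpha)).
Qed.
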